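(* Let $n,k$ be integers with $1<k<n-1$, let $\mathcal{P}_{k,n}=\{x\in[0,1]^n:\sum_{i=1}^nx_i=k\}$, let $\mathcal{F}$ be a strong Bernoulli factory for $\mathcal{P}_{k,n}$, and let $v,v'$ be two distinct vertices of $\mathcal{P}_{k,n}$. Then for every $T\ge0$, $\nabla P_{v,T}(v')=0$.
   Context: A Bernoulli factory with output set $V$ (for inputs $x\in[0,1]^n$) is a (possibly infinite) rooted binary tree whose internal nodes are labeled by an index $i\in[n]$ or a known constant $c\in(0,1)$ and whose leaves are labeled by elements of $V$; on input $x$ one walks from the root, at a node labeled $i$ flipping a fresh independent coin that is $1$ with probability $x_i$, at a node labeled $c$ a fresh coin of bias $c$, following the edge labeled by the outcome, and outputs the label of the leaf reached; $\mathcal{F}(x)$ is the output and $T_{\mathcal{F}}(x)$ the depth of the leaf reached. For a polytope $\mathcal{P}$ with vertex set $V$, a strong Bernoulli factory for $\mathcal{P}$ is such a factory with output set $V$ that terminates almost surely and satisfies $\mathbb{E}[\mathcal{F}(x)]=x$ for all $x\in\mathcal{P}$. $P_{v,T}(x)=\Pr[\mathcal{F}(x)=v\wedge T_{\mathcal{F}}(x)\le T]$, regarded as the polynomial on $\mathbb{R}^n$ equal to the sum, over leaves labeled $v$ at depth at most $T$, of the product of the transition probabilities along the root-to-leaf path; $\nabla$ is its gradient in $\mathbb{R}^n$. *)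

From HB Require Import structures.
From mathcomp Require Import all_boot all_order all_algebra.
From mathcomp Require Import all_classical all_reals all_analysis.
Set Implicit Arguments. Unset Strict Implicit. Unset Printing Implicit Defensive.
Import Order.TTheory GRing.Theory Num.Theory.
Import numFieldNormedType.Exports.
Local Open Scope classical_set_scope.
Local Open Scope ring_scope.

Section BF.
Variables (R : realType) (n : nat).

(* Node labels of a Bernoulli factory: coin index i, known constant c, or
   a leaf labelled by an output point of R^n (row vectors). *)
Inductive node := NCoin of 'I_n | NConst of R | NLeaf of 'rV[R]_n.

(* A (possibly infinite) rooted binary tree: the node reached from the root
   by the sequence of edge labels s (true = outcome 1).  Only nodes all of
   whose proper ancestors are internal belong to the tree. *)
Definition tree := seq bool -> node.

Definition internal (nd : node) : bool :=
  if nd is NLeaf _ then false else true.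

Definition reached (t : tree) (s : seq bool) : bool :=
  all (fun k => internal (t (take k s))) (iota 0 (size s)).

Definition leaf_label (t : tree) (s : seq bool) : option 'rV[R]_n :=
  if reached t s then (if t s is NLeaf v then Some v else None) else None.

Definition edge_prob (nd : node) (b : bool) (x : 'rV[R]_n) : R :=
  match nd with
  | NCoin i => if b then x 0 i else 1 - x 0 i
  | NConst c => if b then c else 1 - c
  | NLeaf _ => 0
  end.

Definition path_prob (t : tree) (s : seq bool) (x : 'rV[R]_n) : R :=
  \prod_(k < size s) edge_prob (t (take k s)) (nth false s k) x.

Definition P_vT (t : tree) (v : 'rV[R]_n) (T : nat) (x : 'rV[R]_n) : R :=
  \sum_(d < T.+1) \sum_(s : d.-tuple bool)
     (if leaf_label t s == Some v then path_prob t s x else 0).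

Definition Pr_le (t : tree) (T : nat) (x : 'rV[R]_n) : R :=
  \sum_(d < T.+1) \sum_(s : d.-tuple bool)
     (if leaf_label t s is Some _ then path_prob t s x else 0).

Definition mean_le (t : tree) (T : nat) (x : 'rV[R]_n) : 'rV[R]_n :=
  \sum_(d < T.+1) \sum_(s : d.-tuple bool)
     (if leaf_label t s is Some w then path_prob t s x *: w else 0).

Definition is_vertex (P : set 'rV[R]_n) (x : 'rV[R]_n) : Prop :=
  P x /\ forall (a b : 'rV[R]_n) (l : R), P a -> P b -> 0 < l < 1 ->
    x = l *: a + (1 - l) *: b -> a = b.

Definition strong_BF (P : set 'rV[R]_n) (t : tree) : Prop :=
  [/\ (forall s c, reached t s -> t s = NConst c -> 0 < c < 1),
      (forall s v, leaf_label t s = Some v -> is_vertex P v),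
      (forall x, P x -> Pr_le t T x @[T --> \oo] --> (1 : R)) &
      (forall x, P x -> mean_le t T x @[T --> \oo] --> x)].

Definition Pkn (k : nat) : set 'rV[R]_n :=
  [set x | (forall i, 0 <= x 0 i <= 1) /\ \sum_(i < n) x 0 i = k%:R].

End BF.

(* Fix a coordinate i and a coordinate q with v'_q = 1 - v'_i.  Moving mass
   between i and q traces an edge of P_{k,n} through v', on which the affine
   function "l1-distance to v' off {i, q}" vanishes; this function is
   nonnegative on P_{k,n}.  On input x on that edge, E[f(F(x)); T_F(x) <= T] is
   nondecreasing in T with limit f(x) = 0, so the factory never outputs a vertex
   where f is positive.  Since 1 < k < n - 1, q can be chosen with f(v) > 0, and
   then P_{v,T} vanishes on the whole edge.  As P_{v,T} >= 0 on the cube, at the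
   corner v' its derivatives along the inward directions -e_i and e_q (say
   v'_i = 1) are nonnegative, while its derivative along e_q - e_i is zero;
   hence both partial derivatives vanish. *)

From HB Require Import structures.
From mathcomp Require Import all_boot all_order all_algebra.
From mathcomp Require Import all_classical all_reals all_analysis.
From mathcomp Require Import ring lra zify.
Import Order.TTheory GRing.Theory Num.Theory.
Import numFieldNormedType.Exports.
Local Open Scope classical_set_scope.
Local Open Scope ring_scope.
Set Implicit Arguments. Unset Strict Implicit.

Section Factory.
Variables (R : realType) (n : nat) (t : tree R n).

Definition unit_cube : set 'rV[R]_n := [set x | forall i, 0 <= x 0 i <= 1].

Definition affine_form (c : R) (a : 'I_n -> R) (y : 'rV[R]_n) : R :=
  c + \sum_l a l * y 0 l.

Definition expect_le (T : nat) (x : 'rV[R]_n) (g : 'rV[R]_n -> R) : R :=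
  \sum_(d < T.+1) \sum_(s : d.-tuple bool)
     (if leaf_label t s is Some w then path_prob t s x * g w else 0).

Hypothesis const_prob : forall s c, reached t s -> t s = NConst n c -> 0 < c < 1.

Lemma reached_take s m : reached t s -> (m <= size s)%N -> reached t (take m s).
Proof.
move=> /allP rs ms; apply/allP => l; rewrite mem_iota add0n size_take_min.
move=> /andP[_ lm]; rewrite take_takel; last by rewrite ltnW // (leq_trans lm) // geq_minl.
by apply: rs; rewrite mem_iota add0n /= (leq_trans lm) // geq_minr.
Qed.

Lemma leaf_label_reached s w : leaf_label t s = Some w -> reached t s.
Proof. by rewrite /leaf_label; case: (reached t s). Qed.

Lemma path_prob_ge0 s x : reached t s -> unit_cube x -> 0 <= path_prob t s x.
Proof.
move=> rs hx; apply: prodr_ge0 => m _.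
case E: (t (take m s)) => [i|c|w] /=.
- by have /andP[x0 x1] := hx i; case: (nth _ _ _); rewrite ?subr_ge0.
- have /andP[c0 c1] := const_prob (reached_take rs (ltnW (ltn_ord m))) E.
  by case: (nth _ _ _); rewrite ?subr_ge0 ltW.
- by [].
Qed.

Lemma P_vT_ge0 v T x : unit_cube x -> 0 <= P_vT t v T x.
Proof.
move=> hx; apply: sumr_ge0 => d _; apply: sumr_ge0 => s _.
by case: eqP => // /leaf_label_reached rs; exact: path_prob_ge0.
Qed.

Lemma expect_le_affine T x c a :
  expect_le T x (affine_form c a) = c * Pr_le t T x + \sum_l a l * mean_le t T x 0 l.
Proof.
under [X in _ = _ + X]eq_bigr => l _ do rewrite summxE mulr_sumr.
rewrite exchange_big mulr_sumr -big_split; apply: eq_bigr => d _ /=.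
under [X in _ = _ + X]eq_bigr => l _ do rewrite summxE mulr_sumr.
rewrite exchange_big mulr_sumr -big_split; apply: eq_bigr => s _ /=.
case: leaf_label => [w|]; last by rewrite mulr0 add0r big1 // => l _; rewrite mxE mulr0.
rewrite mulrDr mulr_sumr mulrC; congr (_ + _); apply: eq_bigr => l _.
by rewrite !mxE; ring.
Qed.

Lemma expect_le_nondecreasing x (g : 'rV[R]_n -> R) : unit_cube x ->
  (forall s w, leaf_label t s = Some w -> 0 <= g w) ->
  nondecreasing_seq (fun T => expect_le T x g).
Proof.
move=> hx g0; pose G d := \sum_(s : d.-tuple bool)
  (if leaf_label t s is Some w then path_prob t s x * g w else 0).
have -> : (fun T => expect_le T x g) = fun T => \sum_(0 <= d < T.+1) G d.
  by apply/funext => T; rewrite big_mkord.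
move=> T T' TT'; apply: (nondecreasing_series (P := xpredT)) => [d _ _|]; last by rewrite ltnS.
apply: sumr_ge0 => s _; case E: leaf_label => [w|//]; apply: mulr_ge0; last exact: g0 E.
exact: path_prob_ge0 (leaf_label_reached E) hx.
Qed.

End Factory.

Section Face.
Variables (R : realType) (n : nat) (t : tree R n) (S : set 'rV[R]_n).
Hypothesis hF : strong_BF S t.

Lemma expect_le_affine_cvg x c a : S x ->
  expect_le t T x (affine_form c a) @[T --> \oo] --> affine_form c a x.
Proof.
case: hF => _ _ hpr hmean Sx; under eq_fun do rewrite expect_le_affine.
rewrite /affine_form; apply: cvgD.
  by rewrite -[X in _ --> X]mulr1; apply: cvgMl_tmp; exact: hpr.
apply: cvg_big => [|l _]; first exact: add_continuous.
apply: cvgMl_tmp; exact: cvg_comp _ _ (hmean _ Sx) (@coord_continuous R 1 n 0 l x).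
Qed.

Lemma P_vT_le_expect v T x (f : 'rV[R]_n -> R) : unit_cube x ->
  (forall y, S y -> 0 <= f y) -> f v * P_vT t v T x <= expect_le t T x f.
Proof.
case: hF => hc hv _ _ hx f0; rewrite mulr_sumr; apply: ler_sum => d _.
rewrite mulr_sumr; apply: ler_sum => s _.
case E: leaf_label => [w|]; last by rewrite mulr0.
case: eqP => [[<-]|_]; first by rewrite mulrC.
rewrite mulr0; apply: mulr_ge0; last exact: f0 (proj1 (hv _ _ E)).
exact: (path_prob_ge0 hc (leaf_label_reached E) hx).
Qed.

(* [E[f(F(x)) ; T_F(x) <= T]] is nondecreasing in [T] and, f being affine and
   the factory unbiased, tends to [f x = 0]. *)
Lemma P_vT_eq0_on_face v T x c a : S x -> unit_cube x ->
  (forall y, S y -> 0 <= affine_form c a y) -> affine_form c a x = 0 ->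
  0 < affine_form c a v -> P_vT t v T x = 0.
Proof.
move=> Sx hx f0 fx fv; have [hc hv _ _] := hF.
have cvg_expect := expect_le_affine_cvg (c := c) (a := a) Sx.
have expect_le0 : expect_le t T x (affine_form c a) <= 0.
  rewrite -fx -(cvg_lim _ cvg_expect) //; apply: nondecreasing_cvgn_le.
    by apply: (expect_le_nondecreasing hc hx) => s w /hv[/f0].
  by apply/cvg_ex; exists (affine_form c a x).
have := le_trans (P_vT_le_expect v T hx f0) expect_le0.
rewrite pmulr_rle0 // => P_le0.
by apply/le_anti; rewrite P_le0 P_vT_ge0.
Qed.

End Face.

Section Differentiability.
Variables (R : realType) (V : normedModType R).

Lemma differentiable_big_sum (W : normedModType R) (I : Type) (r : seq I) (P : pred I)
    (F : I -> V -> W) x :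
  (forall i, differentiable (F i) x) ->
  differentiable (fun y => \sum_(i <- r | P i) F i y) x.
Proof.
move=> dF; elim: r => [|i r IH]; under eq_fun do rewrite ?big_nil ?big_cons.
  exact: differentiable_cst.
by case: (P i) => //; exact: differentiableD.
Qed.

Lemma differentiable_big_prod (I : Type) (r : seq I) (P : pred I) (F : I -> V -> R) x :
  (forall i, differentiable (F i) x) ->
  differentiable (fun y => \prod_(i <- r | P i) F i y) x.
Proof.
move=> dF; elim: r => [|i r IH]; under eq_fun do rewrite ?big_nil ?big_cons.
  exact: differentiable_cst.
by case: (P i) => //; exact: differentiableM.
Qed.

End Differentiability.

Lemma differentiable_edge_prob (R : realType) n (nd : node R n) b x :
  differentiable (edge_prob nd b) x.
Proof.
case: nd => [i|c|w]; case: b; rewrite /edge_prob; try exact: differentiable_cst.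
  exact: differentiable_coord.
apply: differentiableB; [exact: differentiable_cst | exact: differentiable_coord].
Qed.

Lemma differentiable_P_vT (R : realType) n (t : tree R n) v T x :
  differentiable (P_vT t v T) x.
Proof.
apply: differentiable_big_sum => d; apply: differentiable_big_sum => s.
case: (_ == _) => //; apply: differentiable_big_prod => m.
exact: differentiable_edge_prob.
Qed.

Lemma cvg_dnbhs_at_right (R : numFieldType) (U : topologicalType) (g : R -> U)
    (x : R) (l : U) :
  g @ x^' --> l -> g @ x^'+ --> l.
Proof.
move=> gl A /gl /nbhs_ballP[_ /posnumP[e] xe_A].
by exists e%:num => //= y xe_y /gt_eqF/negbT/xe_A; exact.
Qed.

Section OneSidedDerivative.
Variables (R : realType) (V : normedModType R) (a u : V).

Lemma derive_ge0_of_right_ge (f : V -> R) : derivable f a u ->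
  (forall h : R, 0 < h < 1 -> f a <= f (h *: u + a)) -> 0 <= 'D_u f a.
Proof.
move=> df hf; apply: (cvgr_to_ge (cvg_dnbhs_at_right df)); near=> h => /=.
have h0 : 0 < h by near: h; exact: nbhs_right_gt.
have h1 : h < 1 by near: h; exact: nbhs_right_lt.
by apply: mulr_ge0; [rewrite invr_ge0 ltW | rewrite subr_ge0 hf ?h0].
Unshelve. all: by end_near.
Qed.

Lemma derive_eq0_of_right_cst (f : V -> R) : derivable f a u ->
  (forall h : R, 0 < h < 1 -> f (h *: u + a) = f a) -> 'D_u f a = 0.
Proof.
move=> df hf; apply/le_anti/andP; split; last first.
  by apply: derive_ge0_of_right_ge => // h /hf ->.
have := derive_ge0_of_right_ge (derivableN df); rewrite deriveN // oppr_ge0.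
by apply=> h /hf E; rewrite opprfctE E.
Qed.

End OneSidedDerivative.

Section Hypersimplex.
Variables (R : realType) (n : nat).
Implicit Types (x y u v : 'rV[R]_n) (i j l p q : 'I_n) (h : R).
Local Open Scope set_scope.

Definition shift_mass i j h x : 'rV[R]_n := x + h *: (delta_mx 0 j - delta_mx 0 i).

Definition boolean_row u := forall l, u 0 l = 0 \/ u 0 l = 1.

Lemma shift_massE i j h x l :
  shift_mass i j h x 0 l = x 0 l + h * ((l == j)%:R - (l == i)%:R).
Proof. by rewrite !mxE !eqxx. Qed.

Lemma sum_shift_mass i j h x : \sum_l shift_mass i j h x 0 l = \sum_l x 0 l.
Proof.
have sum_delta m : \sum_l ((l == m)%:R : R) = 1.
  by rewrite (bigD1 m) //= eqxx big1 ?addr0 // => l /negbTE ->.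
under eq_bigr do rewrite shift_massE.
by rewrite big_split /= -mulr_sumr sumrB !sum_delta subrr mulr0 addr0.
Qed.

Lemma Pkn_shift_mass k i j h x : i != j -> Pkn k x ->
  0 <= x 0 i - h <= 1 -> 0 <= x 0 j + h <= 1 -> Pkn k (shift_mass i j h x).
Proof.
move=> ij [x01 xk] hi hj; split; last by rewrite sum_shift_mass.
move=> l; rewrite shift_massE.
have [->|li] := eqVneq l i; first by rewrite (negbTE ij) sub0r mulrN1.
have [->|lj] := eqVneq l j; first by rewrite subr0 mulr1.
by rewrite subrr mulr0 addr0.
Qed.

Lemma Pkn_fractional_pair k x p : Pkn k x -> 0 < x 0 p < 1 ->
  exists2 q, q != p & 0 < x 0 q < 1.
Proof.
move=> [x01 xk] /andP[xp0 xp1].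
have [//|no_q] := pselect (exists2 q, q != p & 0 < x 0 q < 1); exfalso.
have x_bool q : q != p -> x 0 q = (x 0 q == 1)%:R.
  move=> qp; have /andP[xq0 xq1] := x01 q.
  have [->//|xq_ne1] := eqVneq (x 0 q) 1; have [->//|xq_ne0] := eqVneq (x 0 q) 0.
  by case: no_q; exists q; rewrite // !lt_def xq_ne0 xq0 eq_sym xq_ne1 xq1.
move: xk; rewrite (bigD1 p) //=.
under eq_bigr => q qp do rewrite (x_bool q qp).
rewrite -natr_sum; set m := (\sum_(q < n | q != p) _)%N => xk.
have xpE : x 0 p = k%:R - m%:R by rewrite -xk addrK.
have [mk|km] := ltnP m k.
  by move: xp1; rewrite xpE ltrBlDr nat1r ltr_nat ltnS leqNgt mk.
by move: xp0; rewrite xpE subr_gt0 ltr_nat ltnNge km.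
Qed.

Lemma vertex_Pkn_boolean k v : is_vertex (Pkn k) v -> boolean_row v.
Proof.
move=> [Pv v_extreme] p; have [v01 _] := Pv.
have /andP[vp0 vp1] := v01 p.
have [vp|vp] := eqVneq (v 0 p) 0; first by left.
have [vp'|vp'] := eqVneq (v 0 p) 1; first by right.
have /(Pkn_fractional_pair Pv)[q qp /andP[vq0 vq1]] : 0 < v 0 p < 1.
  by rewrite !lt_def vp vp0 eq_sym vp' vp1.
pose d := Num.min (Num.min (v 0 p) (1 - v 0 p)) (Num.min (v 0 q) (1 - v 0 q)).
have d0 : 0 < d by rewrite !lt_min vq0 !subr_gt0 vq1 !lt_def vp vp0 eq_sym vp' vp1.
have [dp1 dp2] : d <= v 0 p /\ d <= 1 - v 0 p by rewrite !ge_min !lexx /= !orbT.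
have [dq1 dq2] : d <= v 0 q /\ d <= 1 - v 0 q by rewrite !ge_min !lexx /= !orbT.
have P_shift e : -d <= e <= d -> Pkn k (shift_mass q p e v).
  by move=> /andP[e1 e2]; apply: Pkn_shift_mass => //; apply/andP; split; lra.
have : shift_mass q p d v = shift_mass q p (- d) v.
  apply: (v_extreme _ _ (1 / 2)); try by [apply: P_shift; apply/andP; split; lra].
    by apply/andP; split; lra.
  by apply/matrixP => a b; rewrite !mxE; field.
move/(congr1 (fun x => x 0 p)).
by rewrite !shift_massE eqxx [p == q]eq_sym (negbTE qp) subr0 !mulr1; lra.
Qed.

Lemma gap_coord_ge0 (a b : R) : a = 0 \/ a = 1 -> 0 <= b <= 1 -> 0 <= a + (1 - 2 * a) * b.
Proof. by case=> -> /andP[b0 b1]; lra. Qed.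

Lemma gap_coord_eq0 (a b : R) : a = 0 \/ a = 1 -> a + (1 - 2 * a) * b = 0 -> b = a.
Proof. by case=> ->; lra. Qed.

(* For a boolean [u] and [y] in the unit cube, the summand is [|y_l - u_l|]. *)
Definition dist_off u (A : {set 'I_n}) y : R :=
  \sum_(l in ~: A) (u 0 l + (1 - 2 * u 0 l) * y 0 l).

Lemma dist_offE u A y : dist_off u A y =
  affine_form (\sum_(l in ~: A) u 0 l) (fun l => (l \in ~: A)%:R * (1 - 2 * u 0 l)) y.
Proof.
rewrite /dist_off /affine_form big_split /=; congr (_ + _); rewrite big_mkcond.
by apply: eq_bigr => l _; case: (l \in ~: A); rewrite ?mul1r ?mul0r.
Qed.

Lemma dist_off_ge0 u A y : boolean_row u -> unit_cube y -> 0 <= dist_off u A y.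
Proof. by move=> bu cy; apply: sumr_ge0 => l _; exact: gap_coord_ge0. Qed.

Lemma dist_off_eq0 u A y : boolean_row u -> unit_cube y -> dist_off u A y = 0 ->
  forall l, l \notin A -> y 0 l = u 0 l.
Proof.
move=> bu cy /psumr_eq0P gap0 l lA; apply: gap_coord_eq0 => //.
by apply: gap0; rewrite ?inE // => m _; exact: gap_coord_ge0.
Qed.

Lemma dist_off_shift_mass u i j h : boolean_row u ->
  dist_off u [set i; j] (shift_mass i j h u) = 0.
Proof.
move=> bu; apply: big1 => l; rewrite !inE negb_or => /andP[/negbTE li /negbTE lj].
by rewrite shift_massE li lj subrr mulr0 addr0; case: (bu l) => ->; ring.
Qed.

Lemma eq_off_pair v v' p q1 q2 : q1 != q2 -> \sum_l v 0 l = \sum_l v' 0 l ->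
  (forall l, l \notin [set p; q1] -> v 0 l = v' 0 l) ->
  (forall l, l \notin [set p; q2] -> v 0 l = v' 0 l) -> v = v'.
Proof.
move=> q12 sum_eq eq1 eq2.
have off_p l : l != p -> v 0 l = v' 0 l.
  move=> lp; have [lq1|lq1] := eqVneq l q1; last by apply: eq1; rewrite !inE negb_or lp lq1.
  by apply: eq2; rewrite !inE negb_or lp lq1 q12.
apply/matrixP => a l; rewrite (ord1 a); have [->|lp] := eqVneq l p; last exact: off_p.
by move: sum_eq; rewrite (bigD1 p) // [in RHS](bigD1 p) //= (eq_bigr _ off_p) => /addIr.
Qed.

Lemma dist_off_pos_pair v v' p q1 q2 : boolean_row v' -> unit_cube v ->
  \sum_l v 0 l = \sum_l v' 0 l -> v != v' -> q1 != q2 ->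
  0 < dist_off v' [set p; q1] v \/ 0 < dist_off v' [set p; q2] v.
Proof.
move=> bv' cv sum_eq vv' q12; apply/orP; rewrite !lt_def !dist_off_ge0 // !andbT -negb_and.
apply: contra vv' => /andP[/eqP gap1 /eqP gap2]; apply/eqP.
by apply: (eq_off_pair q12 sum_eq); [exact: dist_off_eq0 gap1 | exact: dist_off_eq0 gap2].
Qed.

Lemma card_ones_boolean_row k u : boolean_row u -> \sum_l u 0 l = k%:R ->
  #|[set l | u 0 l == 1]| = k.
Proof.
move=> bu uk; apply/eqP; rewrite -(@eqr_nat R) -uk -sum1_card natr_sum; apply/eqP.
rewrite [RHS](bigID [pred l | u 0 l == 1]) /= [X in _ + X]big1 ?addr0.
  by apply: eq_big => l; rewrite ?inE // => /eqP.
by move=> l; case: (bu l) => ->; rewrite ?eqxx.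
Qed.

Lemma opposite_coords_gt1 k u p : boolean_row u -> \sum_l u 0 l = k%:R ->
  (1 < k)%N -> (k < n - 1)%N -> (1 < #|[set q | (u 0 q == 1 - u 0 p)%R]|)%N.
Proof.
move=> bu uk k1 kn; have ones := card_ones_boolean_row bu uk.
case: (bu p) => ->; rewrite ?subr0 ?subrr; first by rewrite ones.
have -> : [set q : 'I_n | u 0 q == 0] = ~: [set l | u 0 l == 1].
  apply/setP => q; rewrite !inE.
  by case: (bu q) => ->; rewrite ?eqxx ?oner_eq0 // eq_sym oner_eq0.
by have := cardsC [set l | u 0 l == 1]; rewrite card_ord ones; lia.
Qed.

Lemma exists_opposite_dist_off_pos k v v' p : (1 < k)%N -> (k < n - 1)%N ->
  Pkn k v -> Pkn k v' -> boolean_row v' -> v != v' ->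
  exists2 q, v' 0 q = 1 - v' 0 p & 0 < dist_off v' [set p; q] v.
Proof.
move=> k1 kn [cv sv] [_ sv'] bv' vv'.
have /card_gt1P[q1 [q2 [+ + q12]]] := opposite_coords_gt1 p bv' sv' k1 kn.
rewrite !inE => /eqP vq1 /eqP vq2.
by case: (dist_off_pos_pair p bv' cv (etrans sv (esym sv')) vv' q12); [exists q1 | exists q2].
Qed.

Lemma P_vT_eq0_on_edge k (t : tree R n) v v' T i j h : strong_BF (Pkn k) t ->
  Pkn k v' -> boolean_row v' -> v' 0 i = 1 -> v' 0 j = 0 ->
  0 < dist_off v' [set i; j] v -> 0 <= h <= 1 -> P_vT t v T (shift_mass i j h v') = 0.
Proof.
move=> hF Pv' bv' vi vj gap_pos /andP[h0 h1].
have ij : i != j by apply/eqP => ij; move: vi; rewrite ij vj; lra.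
have Pedge : Pkn k (shift_mass i j h v').
  by apply: Pkn_shift_mass; rewrite ?vi ?vj //; apply/andP; split; lra.
apply: (P_vT_eq0_on_face hF T Pedge (proj1 Pedge) (c := \sum_(l in ~: [set i; j]) v' 0 l)
  (a := fun l => (l \in ~: [set i; j])%:R * (1 - 2 * v' 0 l))) => [y [cy _]||];
  rewrite -dist_offE //; [exact: dist_off_ge0 | exact: dist_off_shift_mass].
Qed.

Lemma differential_edge_eq0 (f : 'rV[R]_n -> R) a i j : differentiable f a ->
  (forall y, unit_cube y -> 0 <= f y) -> unit_cube a -> a 0 i = 1 -> a 0 j = 0 ->
  (forall h, 0 <= h <= 1 -> f (shift_mass i j h a) = 0) ->
  'd f a (delta_mx 0 i) = 0 /\ 'd f a (delta_mx 0 j) = 0.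
Proof.
move=> df f_ge0 ca ai aj f_edge.
have fa0 : f a = 0 by rewrite -(f_edge 0) ?lexx ?ler01 // /shift_mass scale0r addr0.
have into_cube m (e : R) : 0 <= a 0 m + e <= 1 -> unit_cube (e *: delta_mx 0 m + a).
  move=> ame l; rewrite !mxE eqxx /=; have [<-|ml] := eqVneq m l; first by rewrite mulr1 addrC.
  by rewrite mulr0 add0r ca.
have Di : 0 <= 'd f a (- delta_mx 0 i).
  rewrite -deriveE //; apply: derive_ge0_of_right_ge; first exact: diff_derivable.
  move=> h /andP[h0 h1]; rewrite fa0 f_ge0 // scalerN -scaleNr.
  by apply: into_cube; rewrite ai; apply/andP; split; lra.
have Dj : 0 <= 'd f a (delta_mx 0 j).
  rewrite -deriveE //; apply: derive_ge0_of_right_ge; first exact: diff_derivable.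
  move=> h /andP[h0 h1]; rewrite fa0 f_ge0 //.
  by apply: into_cube; rewrite aj; apply/andP; split; lra.
have Dji : 'd f a (delta_mx 0 j - delta_mx 0 i) = 0.
  rewrite -deriveE //; apply: derive_eq0_of_right_cst; first exact: diff_derivable.
  by move=> h /andP[h0 h1]; rewrite fa0 addrC f_edge // !ltW.
by move: Di Dji; rewrite linearN linearB /=; split; lra.
Qed.

Lemma differential_P_vT_coord_eq0 k (t : tree R n) v v' T i q :
  strong_BF (Pkn k) t -> Pkn k v' -> boolean_row v' -> v' 0 q = 1 - v' 0 i ->
  0 < dist_off v' [set i; q] v -> 'd (P_vT t v T) v' (delta_mx 0 i) = 0.
Proof.
move=> hF Pv' bv' vq gap_pos; have [hc _ _ _] := hF.
have edge_eq0 a b : v' 0 a = 1 -> v' 0 b = 0 -> 0 < dist_off v' [set a; b] v ->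
    'd (P_vT t v T) v' (delta_mx 0 a) = 0 /\ 'd (P_vT t v T) v' (delta_mx 0 b) = 0.
  move=> va vb ab_pos; apply: differential_edge_eq0 => //.
  - exact: differentiable_P_vT.
  - by move=> y; exact: P_vT_ge0.
  - exact: proj1 Pv'.
  - by move=> h; exact: P_vT_eq0_on_edge hF Pv' bv' va vb ab_pos.
case: (bv' i) => vi; rewrite vi ?subr0 ?subrr in vq.
  by rewrite finset.setUC in gap_pos; have [] := edge_eq0 q i vq vi gap_pos.
by have [] := edge_eq0 i q vi vq gap_pos.
Qed.

End Hypersimplex.

Unset Implicit Arguments. Set Strict Implicit.

Theorem lemma7p5 (R : realType) (n k : nat) (hk1 : (1 < k)%N) (hk2 : (k < n - 1)%N)
  (t : tree R n) (hF : strong_BF (@Pkn R n k) t)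
  (v v' : 'rV[R]_n) (hv : is_vertex (@Pkn R n k) v) (hv' : is_vertex (@Pkn R n k) v')
  (hvv' : v != v') (T : nat) :
  forall i : 'I_n, is_derive v' (delta_mx 0 i) (P_vT t v T) 0.
Proof.
move=> i; have bv' := vertex_Pkn_boolean hv'; have [Pv _] := hv; have [Pv' _] := hv'.
have [q vq gap_pos] := exists_opposite_dist_off_pos i hk1 hk2 Pv Pv' bv' hvv'.
have dP := differentiable_P_vT t v T v'.
apply: DeriveDef; first exact: diff_derivable.
by rewrite deriveE // (differential_P_vT_coord_eq0 T hF Pv' bv' vq gap_pos).
Qed.
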